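(* Let $\mathcal X,\mathcal Y$ be Hilbert spaces, $\mathbf A=(A_1,\dots,A_d)\in\mathcal L(\mathcal X)^d$, $C\in\mathcal L(\mathcal X,\mathcal Y)$. (1) If the Stein inequality $H-\sum_{j=1}^dA_j^*HA_j\ge C^*C$ has a strictly positive-definite solution $H\in\mathcal L(\mathcal X)$, then $(C,\mathbf A)$ is output-stable; moreover the observability gramian $\mathcal G_{C,\mathbf A}$ is the unique positive semidefinite solution of the Stein equation $H-\sum_jA_j^*HA_j=C^*C$ if and only if $\mathbf A$ is strongly stable. (2) If the Stein equation $H-\sum_jA_j^*HA_j=C^*C$ has a strictly positive-definite solution $H\in\mathcal L(\mathcal X)$, then $(C,\mathbf A)$ is output-stable and $\mathcal G_{C,\mathbf A}$ is the unique positive semidefinite solution of this Stein equation if and only if $\mathbf A$ is strongly stable; in this case $(C,\mathbf A)$ is moreover exactly observable.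
   Context: $\mathcal F_d$: free semigroup of words on $\{1,\dots,d\}$; for $v=i_N\cdots i_1$, $|v|=N$, $\mathbf A^v=A_{i_N}\cdots A_{i_1}$, $\mathbf A^\emptyset=I$. $(C,\mathbf A)$ is output-stable if $x\mapsto\{C\mathbf A^vx\}_{v\in\mathcal F_d}$ is bounded from $\mathcal X$ into $\ell^2_{\mathcal Y}(\mathcal F_d)$; $\mathcal G_{C,\mathbf A}=\sum_v(\mathbf A^v)^*C^*C\mathbf A^v$ (strong convergence). $\mathbf A$ is strongly stable if $\lim_N\sum_{|v|=N}\|\mathbf A^vx\|^2=0$ for all $x$. Exactly observable: $\mathcal G_{C,\mathbf A}$ strictly positive definite. Strictly positive definite: $\ge\varepsilon I$ for some $\varepsilon>0$. *)

From HB Require Import structures.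
From mathcomp Require Import all_boot all_order all_algebra.
From mathcomp Require Import all_classical all_reals all_analysis.
From mathcomp Require Import complex.
Import GRing.Theory Num.Theory numFieldNormedType.Exports.

Set Implicit Arguments.
Unset Strict Implicit.
Unset Printing Implicit Defensive.

Local Open Scope ring_scope.
Local Open Scope classical_set_scope.
Local Open Scope complex_scope.

Record hilbert (R : realType) := Hilbert {
  hsp :> lmodType R[i];
  ip : hsp -> hsp -> R[i];
  ipDZl : forall (a : R[i]) (x y z : hsp), ip (a *: x + y) z = a * ip x z + ip y z;
  ip_conj : forall x y : hsp, ip y x = (ip x y)^*;
  ip_ge0 : forall x : hsp, 0 <= ip x x;
  ip_eq0 : forall x : hsp, ip x x = 0 -> x = 0;
  hcomplete : forall u : nat -> hsp,
    (forall e : R, 0 < e -> exists N : nat, forall m n : nat, (N <= m)%N -> (N <= n)%N ->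
        complex.Re (ip (u m - u n) (u m - u n)) < e) ->
    exists l : hsp, forall e : R, 0 < e -> exists N : nat, forall n : nat, (N <= n)%N ->
        complex.Re (ip (u n - l) (u n - l)) < e
}.

Arguments ip {R} h _ _.

Definition hnorm2 (R : realType) (X : hilbert R) (x : X) : R :=
  complex.Re (ip X x x).

Definition is_bop (R : realType) (X Y : hilbert R) (f : X -> Y) : Prop :=
  (forall (a : R[i]) (x y : X), f (a *: x + y) = a *: f x + f y) /\
  exists M : R, forall x : X, hnorm2 (f x) <= M * hnorm2 x.

Definition is_adjoint (R : realType) (X Y : hilbert R) (f : X -> Y) (fstar : Y -> X) : Prop :=
  forall (x : X) (y : Y), ip Y (f x) y = ip X x (fstar y).

Definition psd (R : realType) (X : hilbert R) (T : X -> X) : Prop :=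
  forall x : X, 0 <= ip X (T x) x.

Definition spd (R : realType) (X : hilbert R) (T : X -> X) : Prop :=
  exists eps : R, 0 < eps /\ forall x : X, eps%:C * ip X x x <= ip X (T x) x.

(* Words of the free semigroup F_d: a word v = i_N ... i_1 of length N *)
(* is the N-tuple [:: i_N; ...; i_1];  A^v = A_{i_N} ... A_{i_1}.      *)
Definition Aword (R : realType) (X : hilbert R) (d : nat) (A : 'I_d -> X -> X)
  (v : seq 'I_d) (x : X) : X := foldr (fun i y => A i y) x v.

(* (A^v)^* = A_{i_1}^* ... A_{i_N}^* *)
Definition Aword_adj (R : realType) (X : hilbert R) (d : nat) (Astar : 'I_d -> X -> X)
  (v : seq 'I_d) (y : X) : X := foldl (fun z i => Astar i z) y v.

(* (C, A) is output-stable: x |-> (C A^v x)_v is bounded X -> l^2_Y(F_d),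
   i.e. sum_v ||C A^v x||^2 <= M ||x||^2 (all partial sums, ordered by length). *)
Definition output_stable (R : realType) (X Y : hilbert R) (d : nat)
  (C : X -> Y) (A : 'I_d -> X -> X) : Prop :=
  exists M : R, forall (x : X) (K : nat),
    \sum_(N < K) \sum_(v : N.-tuple 'I_d) hnorm2 (C (Aword A v x)) <= M * hnorm2 x.

Definition strongly_stable (R : realType) (X : hilbert R) (d : nat) (A : 'I_d -> X -> X) : Prop :=
  forall x : X,
    (fun N : nat => \sum_(v : N.-tuple 'I_d) hnorm2 (Aword A v x)) @ \oo --> (0 : R).

(* G is the observability gramian G_{C,A} = sum_v (A^v)^* C^* C A^v,
   the series converging strongly (partial sums over words of length < K). *)
Definition is_gramian (R : realType) (X Y : hilbert R) (d : nat)
  (C : X -> Y) (Cstar : Y -> X) (A Astar : 'I_d -> X -> X) (G : X -> X) : Prop :=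
  is_bop G /\
  forall x : X,
    (fun K : nat => hnorm2 (\sum_(N < K) \sum_(v : N.-tuple 'I_d)
                              Aword_adj Astar v (Cstar (C (Aword A v x))) - G x))
      @ \oo --> (0 : R).

Definition stein_ineq (R : realType) (X Y : hilbert R) (d : nat)
  (C : X -> Y) (Cstar : Y -> X) (A Astar : 'I_d -> X -> X) (H : X -> X) : Prop :=
  psd (fun x => H x - \sum_(j < d) Astar j (H (A j x)) - Cstar (C x)).

Definition stein_eq (R : realType) (X Y : hilbert R) (d : nat)
  (C : X -> Y) (Cstar : Y -> X) (A Astar : 'I_d -> X -> X) (H : X -> X) : Prop :=
  forall x : X, H x - \sum_(j < d) Astar j (H (A j x)) = Cstar (C x).

Definition unique_psd_stein_sol (R : realType) (X Y : hilbert R) (d : nat)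
  (C : X -> Y) (Cstar : Y -> X) (A Astar : 'I_d -> X -> X) (G : X -> X) : Prop :=
  [/\ is_bop G, psd G, stein_eq C Cstar A Astar G &
      forall H : X -> X, is_bop H -> psd H -> stein_eq C Cstar A Astar H -> H =1 G].

(* (C, A) exactly observable: the gramian is strictly positive definite *)
Definition exactly_observable (R : realType) (X : hilbert R) (G : X -> X) : Prop := spd G.

From HB Require Import structures.
From mathcomp Require Import all_boot all_order all_algebra.
From mathcomp Require Import all_classical all_reals all_analysis.
From mathcomp Require Import complex ring lra.
Import Order.TTheory GRing.Theory Num.Theory numFieldNormedType.Exports.

Set Implicit Arguments.
Unset Strict Implicit.
Unset Printing Implicit Defensive.

Local Open Scope ring_scope.
Local Open Scope classical_set_scope.
Local Open Scope complex_scope.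

(* Iterating the Stein inequality along words gives, for every K,
     sum_{|v| < K} ||C A^v x||^2 + <B_A^K[H] x, x> <= <H x, x>,
   where B_A[H] = sum_j A_j^* H A_j. Hence the output energy is bounded and the
   partial gramians form an increasing bounded sequence of positive operators,
   which converges strongly because 0 <= T <= M forces ||T x||^2 <= M <T x, x>.
   For a positive solution H of the Stein equation the identity holds with
   equality, and strong stability makes the tail <B_A^K[H] x, x> vanish, so
   <H x, x> = <G x, x> and H = G. Conversely, the tails B_A^n[H] decrease to a
   positive fixed point D of B_A, so G + D is another positive solution;
   uniqueness forces D = 0, and H >= eps I then bounds
   eps sum_{|v| = n} ||A^v x||^2 by the vanishing tail. In part (2) uniqueness
   gives G = H, which is strictly positive. *)

Section ComplexFacts.
Variable R : realType.
Implicit Types (z w : R[i]) (t : R).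

Lemma Re_ge0 z : 0 <= z -> 0 <= complex.Re z.
Proof. by rewrite lecE => /andP[]. Qed.

Lemma ler_Re z w : z <= w -> complex.Re z <= complex.Re w.
Proof. by rewrite lecE => /andP[]. Qed.

Lemma ge0_complex z : complex.Im z = 0 -> 0 <= complex.Re z -> 0 <= z.
Proof. by move=> z0 Rez_ge0; rewrite lecE z0 eqxx. Qed.

Lemma Re_conj z : complex.Re z^* = complex.Re z.
Proof. by case: z. Qed.

Lemma Re_realM t z : complex.Re (t%:C * z) = t * complex.Re z.
Proof. by case: z => a b /=; rewrite mul0r subr0. Qed.

End ComplexFacts.

Section InnerProduct.
Variables (R : realType) (X : hilbert R).
Implicit Types (x y z : X) (a : R[i]) (t : R).

Lemma ipD x y z : ip X (x + y) z = ip X x z + ip X y z.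
Proof. by have := ipDZl 1 x y z; rewrite scale1r mul1r. Qed.

Lemma ip0 z : ip X 0 z = 0.
Proof. by have := ipDZl (-1) z z z; rewrite scaleN1r addNr mulN1r addNr. Qed.

Lemma ipZ a x z : ip X (a *: x) z = a * ip X x z.
Proof. by have := ipDZl a x 0 z; rewrite addr0 ip0 addr0. Qed.

Lemma ipN x z : ip X (- x) z = - ip X x z.
Proof. by rewrite -scaleN1r ipZ mulN1r. Qed.

Lemma ipB x y z : ip X (x - y) z = ip X x z - ip X y z.
Proof. by rewrite ipD ipN. Qed.

Lemma ip_suml I (r : seq I) (P : pred I) (F : I -> X) z :
  ip X (\sum_(i <- r | P i) F i) z = \sum_(i <- r | P i) ip X (F i) z.
Proof. exact: (big_morph _ (fun x y => ipD x y z) (ip0 z)). Qed.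

Lemma ipDr z x y : ip X z (x + y) = ip X z x + ip X z y.
Proof. by rewrite ip_conj ipD rmorphD /= -!ip_conj. Qed.

Lemma ipZr z a x : ip X z (a *: x) = a^* * ip X z x.
Proof. by rewrite ip_conj ipZ rmorphM /= -ip_conj. Qed.

Lemma ipNr z x : ip X z (- x) = - ip X z x.
Proof. by rewrite ip_conj ipN rmorphN /= -ip_conj. Qed.

Lemma ipBr z x y : ip X z (x - y) = ip X z x - ip X z y.
Proof. by rewrite ipDr ipNr. Qed.

Lemma ip_injr x y : (forall z, ip X z x = ip X z y) -> x = y.
Proof.
move=> xy; apply/eqP; rewrite -subr_eq0; apply/eqP/ip_eq0.
by rewrite ipBr xy subrr.
Qed.

Lemma Re_ipC x y : complex.Re (ip X y x) = complex.Re (ip X x y).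
Proof. by rewrite ip_conj Re_conj. Qed.

Lemma Re_ipZl t x y : complex.Re (ip X (t%:C *: x) y) = t * complex.Re (ip X x y).
Proof. by rewrite ipZ Re_realM. Qed.

Lemma Re_ipZr t x y : complex.Re (ip X x (t%:C *: y)) = t * complex.Re (ip X x y).
Proof. by rewrite ipZr; case: (ip X x y) => a b /=; ring. Qed.

Lemma Re_ip_i x y : complex.Re (ip X x ('i *: y)) = complex.Im (ip X x y).
Proof. by rewrite ipZr; case: (ip X x y) => a b /=; ring. Qed.

Lemma ipxx x : ip X x x = (hnorm2 x)%:C.
Proof. by rewrite /hnorm2 RRe_real // ger0_real // ip_ge0. Qed.

Lemma hnorm2_ge0 x : 0 <= hnorm2 x.
Proof. exact/Re_ge0/ip_ge0. Qed.

Lemma hnorm2_eq0 x : hnorm2 x = 0 -> x = 0.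
Proof. by move=> x0; apply: ip_eq0; rewrite ipxx x0. Qed.

Lemma hnorm20 : hnorm2 (0 : X) = 0.
Proof. by rewrite /hnorm2 ip0. Qed.

Lemma hnorm2_gt0 x : x != 0 -> 0 < hnorm2 x.
Proof. by move=> x_neq0; rewrite lt0r hnorm2_ge0 andbT (contra_neq (@hnorm2_eq0 x)). Qed.

Lemma hnorm2D x y : hnorm2 (x + y) = hnorm2 x + hnorm2 y + 2 * complex.Re (ip X x y).
Proof. rewrite /hnorm2 ipD !ipDr !raddfD /= (Re_ipC x y); ring. Qed.

Lemma hnorm2N x : hnorm2 (- x) = hnorm2 x.
Proof. by rewrite /hnorm2 ipN ipNr opprK. Qed.

Lemma hnorm2_subC x y : hnorm2 (x - y) = hnorm2 (y - x).
Proof. by rewrite -hnorm2N opprB. Qed.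

Lemma hnorm2_realZ t x : hnorm2 (t%:C *: x) = t ^+ 2 * hnorm2 x.
Proof. by rewrite /hnorm2 Re_ipZl Re_ipZr mulrA -expr2. Qed.

Lemma hnorm2Z a x :
  hnorm2 (a *: x) = (complex.Re a ^+ 2 + complex.Im a ^+ 2) * hnorm2 x.
Proof. by rewrite /hnorm2 ipZ ipZr ipxx; case: a => a b /=; ring. Qed.

Lemma Re_ip_le x y : 2 * complex.Re (ip X x y) <= hnorm2 x + hnorm2 y.
Proof. by have := hnorm2_ge0 (x - y); rewrite hnorm2D hnorm2N ipNr raddfN /=; lra. Qed.

Lemma hnorm2D_le x y : hnorm2 (x + y) <= 2 * hnorm2 x + 2 * hnorm2 y.
Proof. by have := Re_ip_le x y; rewrite hnorm2D; lra. Qed.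

Lemma Re_ip_sqr_le x y : complex.Re (ip X x y) ^+ 2 <= hnorm2 x * hnorm2 y.
Proof.
have [->|x_neq0] := eqVneq x 0.
  by rewrite ip0 hnorm20 expr0n mul0r.
have x_gt0 := hnorm2_gt0 x_neq0.
have := hnorm2_ge0 ((hnorm2 x)%:C *: y - (complex.Re (ip X x y))%:C *: x).
rewrite hnorm2D hnorm2N !hnorm2_realZ ipNr raddfN /= Re_ipZl Re_ipZr Re_ipC.
nra.
Qed.

End InnerProduct.

Section Operators.
Variable R : realType.

Section LinearMap.
Variables (X Y : hilbert R) (f : X -> Y).
Hypothesis f_lin : linear f.

Lemma lin0 : f 0 = 0.
Proof. by have := f_lin (-1) 0 0; rewrite !scaleN1r !addNr. Qed.

Lemma linD x y : f (x + y) = f x + f y.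
Proof. by have := f_lin 1 x y; rewrite !scale1r. Qed.

Lemma linZ a x : f (a *: x) = a *: f x.
Proof. by have := f_lin a x 0; rewrite !addr0 lin0 addr0. Qed.

Lemma linN x : f (- x) = - f x.
Proof. by rewrite -scaleN1r linZ scaleN1r. Qed.

Lemma linB x y : f (x - y) = f x - f y.
Proof. by rewrite linD linN. Qed.

Lemma lin_sum I (r : seq I) (P : pred I) (F : I -> X) :
  f (\sum_(i <- r | P i) F i) = \sum_(i <- r | P i) f (F i).
Proof. exact: (big_morph _ linD lin0). Qed.

End LinearMap.

Lemma linear_sub_fun (X Y : hilbert R) (f g : X -> Y) :
  linear f -> linear g -> linear (fun x => f x - g x).
Proof. by move=> f_lin g_lin a x y; rewrite f_lin g_lin scalerBr addrACA opprD. Qed.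

Lemma linear_sum_fun (X Y : hilbert R) I (r : seq I) (P : pred I) (F : I -> X -> Y) :
  (forall i, linear (F i)) -> linear (fun x => \sum_(i <- r | P i) F i x).
Proof.
move=> F_lin a x y; rewrite scaler_sumr -big_split /=.
by apply: eq_bigr => i _; rewrite F_lin.
Qed.

Lemma ip_adjointl (X Y : hilbert R) (f : X -> Y) fs :
  is_adjoint f fs -> forall x y, ip X (fs y) x = ip Y y (f x).
Proof. by move=> fs_adj x y; rewrite ip_conj -fs_adj -ip_conj. Qed.

Lemma adjoint_linear (X Y : hilbert R) (f : X -> Y) fs : is_adjoint f fs -> linear fs.
Proof.
move=> fs_adj a y z; apply: ip_injr => x.
by rewrite -fs_adj ipDr ipZr ipDr ipZr -!fs_adj.
Qed.

Lemma bop_bound (X Y : hilbert R) (f : X -> Y) :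
  is_bop f -> exists2 M, 0 < M & forall x, hnorm2 (f x) <= M * hnorm2 x.
Proof.
case=> _ [M fM]; exists (`|M| + 1) => [|x]; first by rewrite ltr_pwDr.
apply: le_trans (fM x) _; rewrite ler_wpM2r ?hnorm2_ge0 //.
by rewrite (le_trans (ler_norm M)) // lerDl.
Qed.

Lemma bop_add (X Y : hilbert R) (f g : X -> Y) :
  is_bop f -> is_bop g -> is_bop (fun x => f x + g x).
Proof.
move=> f_bop g_bop; split.
  by move=> a x y; rewrite f_bop.1 g_bop.1 scalerDr addrACA.
have [Mf _ fM] := bop_bound f_bop; have [Mg _ gM] := bop_bound g_bop.
exists (2 * Mf + 2 * Mg) => x; apply: le_trans (hnorm2D_le _ _) _.
by have := fM x; have := gM x; lra.
Qed.

Lemma adjoint_bound (X Y : hilbert R) (f : X -> Y) fs : is_bop f -> is_adjoint f fs ->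
  exists2 M, 0 < M & forall y, hnorm2 (fs y) <= M * hnorm2 y.
Proof.
move=> f_bop fs_adj; have [M M_gt0 fM] := bop_bound f_bop.
exists M => // y; have [->|fsy_neq0] := eqVneq (fs y) 0.
  by rewrite hnorm20 mulr_ge0 ?hnorm2_ge0 ?ltW.
have fsy_gt0 := hnorm2_gt0 fsy_neq0.
have := Re_ip_sqr_le (f (fs y)) y; rewrite fs_adj -/(hnorm2 (fs y)).
have := ler_wpM2r (hnorm2_ge0 y) (fM (fs y)).
nra.
Qed.

Section Forms.
Variable X : hilbert R.
Implicit Types (T S : X -> X) (x y z : X).

Definition qform T x : R := complex.Re (ip X (T x) x).

(* Only the real part is required to be symmetric: for linear T, replacing z
   by 'i z shows that T is then symmetric. *)
Definition hermitian T := forall y z, complex.Re (ip X (T y) z) = complex.Re (ip X (T z) y).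

Lemma qformB T S x : qform (fun y => T y - S y) x = qform T x - qform S x.
Proof. by rewrite /qform ipB raddfB. Qed.

Lemma qform_sum I (r : seq I) (P : pred I) (F : I -> X -> X) x :
  qform (fun y => \sum_(i <- r | P i) F i y) x = \sum_(i <- r | P i) qform (F i) x.
Proof. by rewrite /qform ip_suml raddf_sum. Qed.

Lemma hermitianB T S : hermitian T -> hermitian S -> hermitian (fun y => T y - S y).
Proof. by move=> T_herm S_herm y z; rewrite !ipB !raddfB /= T_herm S_herm. Qed.

Lemma hermitian_sum I (r : seq I) (P : pred I) (F : I -> X -> X) :
  (forall i, hermitian (F i)) -> hermitian (fun y => \sum_(i <- r | P i) F i y).
Proof.
move=> F_herm y z; rewrite !ip_suml !raddf_sum.
by apply: eq_bigr => i _; exact: F_herm.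
Qed.

Lemma psd_sum I (r : seq I) (P : pred I) (F : I -> X -> X) :
  (forall i, psd (F i)) -> psd (fun y => \sum_(i <- r | P i) F i y).
Proof. by move=> F_psd y; rewrite ip_suml; apply: sumr_ge0 => i _; exact: F_psd. Qed.

Lemma psd_hermitian T : linear T -> psd T -> hermitian T.
Proof.
move=> T_lin T_psd y z.
(* The imaginary part of <T (y + 'i z), y + 'i z> is Re <T z, y> - Re <T y, z>. *)
have := T_psd (y + 'i *: z); have := T_psd y; have := T_psd z.
rewrite linD // linZ // ipD !ipDr !ipZ !ipZr.
case: (ip X (T y) y) => a1 a2; case: (ip X (T y) z) => b1 b2.
case: (ip X (T z) y) => c1 c2; case: (ip X (T z) z) => e1 e2.
rewrite !lecE /= => /andP[/eqP h1 _] /andP[/eqP h2 _] /andP[/eqP h3 _].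
lra.
Qed.

Lemma spd_psd T : spd T -> psd T.
Proof.
case=> eps [eps_gt0 T_eps] y; apply: le_trans (T_eps y).
by rewrite ipxx -rmorphM ler0c mulr_ge0 ?hnorm2_ge0 ?ltW.
Qed.

Lemma spd_qform T : spd T -> exists2 eps, 0 < eps & forall y, eps * hnorm2 y <= qform T y.
Proof.
case=> eps [eps_gt0 T_eps]; exists eps => // y.
by have := ler_Re (T_eps y); rewrite Re_realM.
Qed.

Lemma bop_qform_le T : is_bop T -> exists2 K, 0 < K & forall x, qform T x <= K * hnorm2 x.
Proof.
move=> T_bop; have [M M_gt0 TM] := bop_bound T_bop.
exists (M + 1) => [|x]; first lra.
have := Re_ip_le (T x) x; have := TM x; have := hnorm2_ge0 x.
rewrite /qform; nra.
Qed.

(* Expand 0 <= <T (M x - T x), M x - T x> and use <T (T x), T x> <= M ||T x||^2. *)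
Lemma hnorm2_le_qform T M : linear T -> hermitian T -> 0 < M ->
  (forall y, 0 <= qform T y <= M * hnorm2 y) -> forall x, hnorm2 (T x) <= M * qform T x.
Proof.
move=> T_lin T_herm M_gt0 T_bnd x.
have /andP[+ _] := T_bnd (M%:C *: x - T x).
have /andP[_ +] := T_bnd (T x).
rewrite /qform linB // linZ // ipB !ipBr !raddfB /= !Re_ipZl !Re_ipZr (T_herm (T x) x).
rewrite /hnorm2; nra.
Qed.

Lemma eq_qform_hermitian T S : linear T -> linear S -> hermitian T -> hermitian S ->
  (forall x, qform T x = qform S x) -> T =1 S.
Proof.
move=> T_lin S_lin T_herm S_herm TS x; apply/eqP; rewrite -subr_eq0; apply/eqP.
apply: hnorm2_eq0; apply/eqP; rewrite eq_le hnorm2_ge0 andbT.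
have := @hnorm2_le_qform (fun y => T y - S y) 1 (linear_sub_fun T_lin S_lin)
  (hermitianB T_herm S_herm) ltr01 _ x.
by rewrite qformB TS subrr mulr0; apply => y; rewrite qformB TS subrr mul1r lexx hnorm2_ge0.
Qed.

End Forms.

End Operators.

Section StrongConvergence.
Variable R : realType.

Lemma squeeze_cvg0 (u v : nat -> R) :
  (forall n, `|u n| <= v n) -> v @ \oo --> 0 -> u @ \oo --> 0.
Proof.
move=> uv v0; apply: (@squeeze_cvgr _ _ _ _ (- v) v); last exact: v0.
- by apply: nearW => n /=; rewrite -ler_norml.
- by rewrite -oppr0; exact: cvgN.
Qed.

Lemma nondecreasing_cauchy (a : nat -> R) B : nondecreasing_seq a ->
  (forall n, a n <= B) ->
  forall e, 0 < e -> exists N, forall n m, (N <= n)%N -> (n <= m)%N -> a m - a n < e.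
Proof.
move=> a_mono aB e e_gt0.
have a_sup : has_sup (range a) by split; [exists (a 0%N), 0%N | exists B => _ [n _ <-]].
have [_ [N _ <-] aN] := sup_adherent e_gt0 a_sup.
exists N => n m Nn nm; have := a_mono _ _ Nn.
have : a m <= sup (range a) by apply: sup_upper_bound => //; exists m.
lra.
Qed.

Section Hilbert.
Variable X : hilbert R.
Implicit Types (u v : nat -> X) (l m : X).

Definition hcvg u l := (fun n => hnorm2 (u n - l)) @ \oo --> (0 : R).

Lemma hcvg_le u l (f : nat -> R) :
  (forall n, hnorm2 (u n - l) <= f n) -> f @ \oo --> 0 -> hcvg u l.
Proof. by move=> uf; apply: squeeze_cvg0 => n; rewrite ger0_norm ?hnorm2_ge0 ?uf. Qed.

Lemma hcvg_cst l : hcvg (fun=> l) l.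
Proof. by apply: (hcvg_le (f := fun=> 0)) => [n|]; rewrite ?subrr ?hnorm20 //; exact: cvg_cst. Qed.

Lemma hcvgD u v l m : hcvg u l -> hcvg v m -> hcvg (fun n => u n + v n) (l + m).
Proof.
move=> ul vm; apply: (hcvg_le (f := fun n => 2 * hnorm2 (u n - l) + 2 * hnorm2 (v n - m))).
  by move=> n; rewrite opprD addrACA; exact: hnorm2D_le.
have -> : (0 : R) = 2 * 0 + 2 * 0 by rewrite mulr0 addr0.
by apply: cvgD; apply: cvgMl_tmp.
Qed.

Lemma hcvg_sum I (r : seq I) (P : pred I) (u : I -> nat -> X) (l : I -> X) :
  (forall i, hcvg (u i) (l i)) ->
  hcvg (fun n => \sum_(i <- r | P i) u i n) (\sum_(i <- r | P i) l i).
Proof.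
move=> ul; elim: r => [|i r IH].
  by rewrite big_nil; under eq_fun do rewrite big_nil; exact: hcvg_cst.
rewrite big_cons; under eq_fun do rewrite big_cons.
by case: (P i) => //; exact: hcvgD.
Qed.

Lemma hcvg_shiftS u l : hcvg u l -> hcvg (fun n => u n.+1) l.
Proof. by rewrite /hcvg -(cvg_shiftS (fun n => hnorm2 (u n - l))). Qed.

Lemma hcvg_unique u l m : hcvg u l -> hcvg u m -> l = m.
Proof.
move=> ul um; apply/eqP; rewrite -subr_eq0; apply/eqP/hnorm2_eq0/eqP.
rewrite eq_le hnorm2_ge0 andbT.
have bound0 : (fun n => 2 * hnorm2 (u n - l) + 2 * hnorm2 (u n - m)) @ \oo --> (0 : R).
  have -> : (0 : R) = 2 * 0 + 2 * 0 by rewrite mulr0 addr0.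
  by apply: cvgD; apply: cvgMl_tmp.
apply: (ler_cvg_to (cvg_cst _) bound0); apply: nearW => n.
have := hnorm2D_le (l - u n) (u n - m).
by rewrite addrA subrK [hnorm2 (l - u n)]hnorm2_subC.
Qed.

Lemma hcvg_Re u l w :
  hcvg u l -> (fun n => complex.Re (ip X (u n) w)) @ \oo --> complex.Re (ip X l w).
Proof.
move=> ul; apply/subr_cvg0.
apply: (squeeze_cvg0 (v := fun n => Num.sqrt (hnorm2 (u n - l) * hnorm2 w))).
  move=> n; rewrite -raddfB -ipB -sqrtr_sqr /=.
  by apply: ler_wsqrtr; exact: Re_ip_sqr_le.
have prod0 : (fun n => hnorm2 (u n - l) * hnorm2 w) @ \oo --> 0 * hnorm2 w.
  exact: cvgMr_tmp.
rewrite -sqrtr0 -(mul0r (hnorm2 w)).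
exact: (continuous_cvg _ (@sqrt_continuous R _) prod0).
Qed.

Lemma hcvg_Im u l w :
  hcvg u l -> (fun n => complex.Im (ip X (u n) w)) @ \oo --> complex.Im (ip X l w).
Proof. by move/(hcvg_Re (w := 'i *: w)); under eq_fun do rewrite Re_ip_i; rewrite Re_ip_i. Qed.

End Hilbert.

Lemma hcvg_bounded (X Y : hilbert R) (f : X -> Y) (M : R) : {morph f : x y / x - y} ->
  (forall x, hnorm2 (f x) <= M * hnorm2 x) -> forall u l, hcvg u l -> hcvg (fun n => f (u n)) (f l).
Proof.
move=> fB fM u l ul; apply: (hcvg_le (f := fun n => M * hnorm2 (u n - l))).
  by move=> n; rewrite -fB.
by rewrite -(mulr0 M); apply: cvgMl_tmp.
Qed.

Section StrongLimits.
Variables (X : hilbert R) (P : nat -> X -> X) (L : X -> X).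
Hypothesis PL : forall x, hcvg (fun n => P n x) (L x).

Lemma strong_limit_linear : (forall n, linear (P n)) -> linear L.
Proof.
move=> P_lin a x y; apply: (hcvg_unique (PL (a *: x + y))).
under eq_fun do rewrite P_lin.
apply: hcvgD (PL y); apply: (hcvg_bounded (M := complex.Re a ^+ 2 + complex.Im a ^+ 2)).
- by move=> z w; rewrite scalerBr.
- by move=> z; rewrite hnorm2Z.
- exact: PL.
Qed.

Lemma strong_limit_bounded K : (forall n x, hnorm2 (P n x) <= K * hnorm2 x) ->
  forall x, hnorm2 (L x) <= 2 * K * hnorm2 x.
Proof.
move=> PK x.
have bound_cvg : (fun n => 2 * hnorm2 (P n x - L x) + 2 * K * hnorm2 x) @ \oo -->
    2 * 0 + 2 * K * hnorm2 x.
  by apply: cvgD; [apply: cvgMl_tmp; exact: PL | exact: cvg_cst].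
rewrite mulr0 add0r in bound_cvg.
apply: (ler_cvg_to (cvg_cst _) bound_cvg); apply: nearW => n.
have := hnorm2D_le (L x - P n x) (P n x); rewrite subrK hnorm2_subC.
by have := PK n x; lra.
Qed.

Lemma strong_limit_qform x : (fun n => qform (P n) x) @ \oo --> qform L x.
Proof. exact: hcvg_Re. Qed.

Lemma strong_limit_psd : (forall n, psd (P n)) -> psd L.
Proof.
move=> P_psd x; apply: ge0_complex.
  have := hcvg_Im (w := x) (PL x).
  have -> : (fun n => complex.Im (ip X (P n x) x)) = fun=> 0.
    by apply/funext => n; exact: ger0_Im (P_psd n x).
  by move=> Im_cvg; exact: (cvg_unique _ Im_cvg (cvg_cst _)).
apply: (ler_cvg_to (cvg_cst _) (strong_limit_qform (x := x))).
by apply: nearW => n; exact: Re_ge0 (P_psd n x).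
Qed.

End StrongLimits.

(* By hnorm2_le_qform, ||P_m x - P_n x||^2 is controlled by the increments of
   the convergent real sequence <P_n x, x>, so (P_n x) is Cauchy. *)
Lemma nondecreasing_strong_cvg (X : hilbert R) (P : nat -> X -> X) (M : R) (x : X) :
  0 < M -> (forall n, linear (P n)) -> (forall n, hermitian (P n)) ->
  (forall n m y, (n <= m)%N -> 0 <= qform (P m) y - qform (P n) y <= M * hnorm2 y) ->
  (exists B, forall n, qform (P n) x <= B) ->
  exists l, hcvg (fun n => P n x) l.
Proof.
move=> M_gt0 P_lin P_herm P_incr [B PB].
have P_cauchy n m : (n <= m)%N ->
    hnorm2 (P m x - P n x) <= M * (qform (P m) x - qform (P n) x).
  move=> nm; rewrite -qformB.
  apply: (hnorm2_le_qform (T := fun y => P m y - P n y)) => //.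
  - exact: linear_sub_fun.
  - exact: hermitianB.
  - by move=> y; rewrite qformB; exact: P_incr.
have q_mono : nondecreasing_seq (fun n => qform (P n) x).
  by move=> n m nm; have /andP[+ _] := P_incr n m x nm; rewrite subr_ge0.
have [l Pl] : exists l, forall e, 0 < e -> exists N, forall n, (N <= n)%N ->
    complex.Re (ip X (P n x - l) (P n x - l)) < e.
  apply: hcomplete => e e_gt0.
  have [N qN] := nondecreasing_cauchy q_mono PB (divr_gt0 e_gt0 M_gt0).
  have P_small n m : (N <= n)%N -> (n <= m)%N -> hnorm2 (P m x - P n x) < e.
    move=> Nn nm; apply: le_lt_trans (P_cauchy n m nm) _.
    by rewrite mulrC -ltr_pdivlMr // qN.
  exists N => m n Nm Nn; case: (leqP m n) => [mn|/ltnW nm].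
    by rewrite -/(hnorm2 _) hnorm2_subC P_small.
  exact: P_small.
exists l; apply/cvgr0Pnorm_lt => e e_gt0; have [N PN] := Pl e e_gt0.
by exists N => // n /= Nn; rewrite ger0_norm ?hnorm2_ge0 ?PN.
Qed.

End StrongConvergence.

Section Words.
Variables (R : realType) (X : hilbert R) (d : nat).

Lemma sum_tuple0 (V : nmodType) (F : seq 'I_d -> V) : \sum_(v : 0.-tuple 'I_d) F v = F [::].
Proof. by rewrite (big_pred1 [tuple]) // => t; apply/esym/eqP; exact: tuple0. Qed.

Lemma sum_tupleS (V : nmodType) n (F : seq 'I_d -> V) :
  \sum_(w : n.+1.-tuple 'I_d) F w = \sum_(j < d) \sum_(v : n.-tuple 'I_d) F (j :: v).
Proof.
rewrite pair_big /= (reindex (fun p : 'I_d * n.-tuple 'I_d => [tuple of p.1 :: p.2])) //.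
exists (fun t : n.+1.-tuple 'I_d => (thead t, [tuple of behead t])).
  by move=> [j v] _; apply: (congr2 pair); [exact: theadE | exact: val_inj].
by move=> t _; rewrite [RHS]tuple_eta; exact: val_inj.
Qed.

Lemma sum_tupleSr (V : nmodType) n (F : seq 'I_d -> V) :
  \sum_(w : n.+1.-tuple 'I_d) F w = \sum_(j < d) \sum_(v : n.-tuple 'I_d) F (rcons v j).
Proof.
elim: n F => [|n IH] F.
  rewrite sum_tupleS; apply: eq_bigr => j _; apply: eq_bigr => v _.
  by case: v => -[|//] ?.
rewrite sum_tupleS; under eq_bigr do rewrite (IH (fun s => F (_ :: s))).
rewrite exchange_big /=; apply: eq_bigr => j _.
by rewrite (sum_tupleS n (fun s => F (rcons s j))).
Qed.

Variable A : 'I_d -> X -> X.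

Lemma Aword_rcons v j x : Aword A (rcons v j) x = Aword A v (A j x).
Proof. by rewrite /Aword foldr_rcons. Qed.

Lemma Aword_adj_rcons (Astar : 'I_d -> X -> X) v j y :
  Aword_adj Astar (rcons v j) y = Astar j (Aword_adj Astar v y).
Proof. by rewrite /Aword_adj foldl_rcons. Qed.

Lemma linear_Aword : (forall j, linear (A j)) -> forall v, linear (Aword A v).
Proof. by move=> A_lin; elim=> [|j v IH] a x y //=; rewrite -/(Aword A v _) IH A_lin. Qed.

Lemma Aword_adjoint (Astar : 'I_d -> X -> X) : (forall j, is_adjoint (A j) (Astar j)) ->
  forall v, is_adjoint (Aword A v) (Aword_adj Astar v).
Proof. by move=> A_adj; elim=> [|j v IH] x y //=; rewrite -/(Aword A v x) A_adj IH. Qed.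

Lemma telescope_words_le (psi c : X -> R) :
  (forall y, c y + \sum_(j < d) psi (A j y) <= psi y) -> forall K x,
  \sum_(N < K) \sum_(v : N.-tuple 'I_d) c (Aword A v x)
    + \sum_(v : K.-tuple 'I_d) psi (Aword A v x) <= psi x.
Proof.
move=> psi_sub; elim=> [|K IH] x.
  by rewrite big_ord0 add0r (sum_tuple0 (fun v => psi (Aword A v x))).
rewrite big_ord_recr /= (sum_tupleS K (fun v => psi (Aword A v x))) exchange_big /= -addrA.
apply: le_trans (IH x); rewrite lerD2l -big_split /=.
by apply: ler_sum => v _; exact: psi_sub.
Qed.

Lemma telescope_words_eq (psi c : X -> R) :
  (forall y, c y + \sum_(j < d) psi (A j y) = psi y) -> forall K x,
  \sum_(N < K) \sum_(v : N.-tuple 'I_d) c (Aword A v x)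
    + \sum_(v : K.-tuple 'I_d) psi (Aword A v x) = psi x.
Proof.
move=> psi_eq; elim=> [|K IH] x.
  by rewrite big_ord0 add0r (sum_tuple0 (fun v => psi (Aword A v x))).
rewrite big_ord_recr /= (sum_tupleS K (fun v => psi (Aword A v x))) exchange_big /=.
rewrite -addrA -[RHS]IH -big_split /=.
by congr (_ + _); apply: eq_bigr => v _; exact: psi_eq.
Qed.

End Words.

Section SteinEquation.
Variables (R : realType) (X Y : hilbert R) (d : nat).
Variables (A Astar : 'I_d -> X -> X) (C : X -> Y) (Cstar : Y -> X).
Hypotheses (A_bop : forall j, is_bop (A j)) (A_adj : forall j, is_adjoint (A j) (Astar j)).
Hypotheses (C_bop : is_bop C) (C_adj : is_adjoint C Cstar).

Let Astar_lin j : linear (Astar j) := adjoint_linear (A_adj j).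

Definition BApow (N : nat) (H : X -> X) (x : X) : X :=
  \sum_(v : N.-tuple 'I_d) Aword_adj Astar v (H (Aword A v x)).

Definition gram_partial (K : nat) (x : X) : X :=
  \sum_(N < K) BApow N (fun y => Cstar (C y)) x.

Definition out_energy (K : nat) (x : X) : R :=
  \sum_(N < K) \sum_(v : N.-tuple 'I_d) hnorm2 (C (Aword A v x)).

Lemma ip_BApow N H x z :
  ip X (BApow N H x) z = \sum_(v : N.-tuple 'I_d) ip X (H (Aword A v x)) (Aword A v z).
Proof. by rewrite ip_suml; apply: eq_bigr => v _; exact: ip_adjointl (Aword_adjoint A_adj v) _ _. Qed.

Lemma qform_BApow N H x : qform (BApow N H) x = \sum_(v : N.-tuple 'I_d) qform H (Aword A v x).
Proof. by rewrite /qform ip_BApow raddf_sum. Qed.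

Lemma BApow0 H x : BApow 0 H x = H x.
Proof. exact: (sum_tuple0 (fun v => Aword_adj Astar v (H (Aword A v x)))). Qed.

Lemma BApowS N H x : BApow N.+1 H x = \sum_(j < d) Astar j (BApow N H (A j x)).
Proof.
rewrite /BApow (sum_tupleSr N (fun w => Aword_adj Astar w (H (Aword A w x)))).
apply: eq_bigr => j _; rewrite (lin_sum (Astar_lin j)); apply: eq_bigr => v _.
by rewrite Aword_adj_rcons Aword_rcons.
Qed.

Lemma linear_BApow N H : linear H -> linear (BApow N H).
Proof.
move=> H_lin; apply: linear_sum_fun => v a x y.
by rewrite (linear_Aword (fun j => (A_bop j).1)) H_lin (adjoint_linear (Aword_adjoint A_adj v)).
Qed.

Lemma hermitian_BApow N H : hermitian H -> hermitian (BApow N H).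
Proof. by move=> H_herm y z; rewrite !ip_BApow !raddf_sum; apply: eq_bigr => v _; exact: H_herm. Qed.

Lemma psd_BApow N H : psd H -> psd (BApow N H).
Proof. by move=> H_psd x; rewrite ip_BApow; apply: sumr_ge0 => v _; exact: H_psd. Qed.

Lemma hcvg_BA (P : nat -> X -> X) (L : X -> X) : (forall x, hcvg (fun n => P n x) (L x)) ->
  forall x, hcvg (fun n => \sum_(j < d) Astar j (P n (A j x))) (\sum_(j < d) Astar j (L (A j x))).
Proof.
move=> PL x; apply: hcvg_sum => j; have [M _ AM] := adjoint_bound (A_bop j) (A_adj j).
exact: (hcvg_bounded (linB (Astar_lin j)) AM (PL (A j x))).
Qed.

Lemma stein_qform H y :
  qform H y - \sum_(j < d) qform H (A j y) - hnorm2 (C y)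
  = complex.Re (ip X (H y - \sum_(j < d) Astar j (H (A j y)) - Cstar (C y)) y).
Proof.
rewrite !ipB !raddfB /= ip_suml (ip_adjointl C_adj).
congr (_ - _ - _); rewrite raddf_sum; apply: eq_bigr => j _ /=.
by rewrite (ip_adjointl (A_adj j)).
Qed.

Lemma stein_ineq_qform H : stein_ineq C Cstar A Astar H ->
  forall y, hnorm2 (C y) + \sum_(j < d) qform H (A j y) <= qform H y.
Proof. by move=> H_stein y; have := Re_ge0 (H_stein y); rewrite /= -stein_qform; lra. Qed.

Lemma stein_eq_qform H : stein_eq C Cstar A Astar H ->
  forall y, hnorm2 (C y) + \sum_(j < d) qform H (A j y) = qform H y.
Proof. by move=> H_eq y; have := stein_qform H y; rewrite H_eq subrr ip0 /=; lra. Qed.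

Lemma stein_ineq_of_eq H : stein_eq C Cstar A Astar H -> stein_ineq C Cstar A Astar H.
Proof. by move=> H_eq x /=; rewrite H_eq subrr ip0. Qed.

Lemma out_energy_stein_le H : stein_ineq C Cstar A Astar H ->
  forall K x, out_energy K x + qform (BApow K H) x <= qform H x.
Proof.
move=> H_stein K x; rewrite qform_BApow.
exact: (telescope_words_le (psi := qform H) (c := fun y => hnorm2 (C y)) (stein_ineq_qform H_stein)).
Qed.

Lemma out_energy_stein_eq H : stein_eq C Cstar A Astar H ->
  forall K x, out_energy K x + qform (BApow K H) x = qform H x.
Proof.
move=> H_eq K x; rewrite qform_BApow.
exact: (telescope_words_eq (psi := qform H) (c := fun y => hnorm2 (C y)) (stein_eq_qform H_eq)).
Qed.

Lemma out_energy_ge0 K x : 0 <= out_energy K x.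
Proof. by apply: sumr_ge0 => N _; apply: sumr_ge0 => v _; exact: hnorm2_ge0. Qed.

Lemma out_energy_nondecreasing x : nondecreasing_seq (fun K => out_energy K x).
Proof.
apply/nondecreasing_seqP => K; rewrite /out_energy big_ord_recr /= lerDl.
by apply: sumr_ge0 => v _; exact: hnorm2_ge0.
Qed.

Lemma qform_BApow_nonincreasing H : stein_ineq C Cstar A Astar H ->
  forall y, nonincreasing_seq (fun n => qform (BApow n H) y).
Proof.
move=> H_stein y; apply/nonincreasing_seqP => n.
rewrite !qform_BApow (sum_tupleS n (fun w => qform H (Aword A w y))) exchange_big /=.
apply: ler_sum => v _; have := stein_ineq_qform H_stein (Aword A v y).
by have := hnorm2_ge0 (C (Aword A v y)); lra.
Qed.

Lemma out_energy_bound H : is_bop H -> psd H -> stein_ineq C Cstar A Astar H ->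
  exists2 M, 0 < M & forall K x, out_energy K x <= M * hnorm2 x.
Proof.
move=> H_bop H_psd H_stein; have [M M_gt0 HM] := bop_qform_le H_bop.
exists M => // K x; have := out_energy_stein_le H_stein K x.
by have := Re_ge0 (psd_BApow K H_psd x); have := HM x; rewrite /qform; lra.
Qed.

Lemma qform_CstarC y : qform (fun z => Cstar (C z)) y = hnorm2 (C y).
Proof. by rewrite /qform (ip_adjointl C_adj). Qed.

Lemma hermitian_CstarC : hermitian (fun z => Cstar (C z)).
Proof. by move=> y z; rewrite !(ip_adjointl C_adj) Re_ipC. Qed.

Lemma psd_CstarC : psd (fun z => Cstar (C z)).
Proof. by move=> y; rewrite (ip_adjointl C_adj) ip_ge0. Qed.

Lemma qform_gram_partial K x : qform (gram_partial K) x = out_energy K x.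
Proof.
rewrite /gram_partial qform_sum; apply: eq_bigr => N _.
by rewrite qform_BApow; apply: eq_bigr => v _; exact: qform_CstarC.
Qed.

Lemma linear_gram_partial K : linear (gram_partial K).
Proof.
apply: linear_sum_fun => N; apply: linear_BApow => a y z.
by rewrite C_bop.1 (adjoint_linear C_adj).
Qed.

Lemma hermitian_gram_partial K : hermitian (gram_partial K).
Proof. by apply: hermitian_sum => N; exact: hermitian_BApow hermitian_CstarC. Qed.

Lemma psd_gram_partial K : psd (gram_partial K).
Proof. by apply: psd_sum => N; exact: psd_BApow psd_CstarC. Qed.

Lemma gram_partialS K x :
  gram_partial K.+1 x = Cstar (C x) + \sum_(j < d) Astar j (gram_partial K (A j x)).
Proof.
rewrite /gram_partial big_ord_recl BApow0; congr (_ + _).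
under [RHS]eq_bigr => j _ do rewrite (lin_sum (Astar_lin j)).
by rewrite exchange_big /=; apply: eq_bigr => N _; rewrite BApowS.
Qed.

Lemma gramian_exists M : 0 < M -> (forall K x, out_energy K x <= M * hnorm2 x) ->
  exists G, is_gramian C Cstar A Astar G.
Proof.
move=> M_gt0 outM.
have S_bnd K y : 0 <= qform (gram_partial K) y <= M * hnorm2 y.
  by rewrite qform_gram_partial out_energy_ge0 outM.
have /choice[G SG] : forall x, exists l, hcvg (fun K => gram_partial K x) l.
  move=> x; apply: (nondecreasing_strong_cvg (M := M)) => //.
  - exact: linear_gram_partial.
  - exact: hermitian_gram_partial.
  - move=> n m y nm; rewrite !qform_gram_partial subr_ge0.
    rewrite (out_energy_nondecreasing y nm) /=.
    by have := out_energy_ge0 n y; have := outM m y; lra.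
  - by exists (M * hnorm2 x) => n; rewrite qform_gram_partial.
exists G; split; last exact: SG.
split; first exact: strong_limit_linear SG linear_gram_partial.
exists (2 * (M * M)); apply: (strong_limit_bounded SG) => K y.
have := hnorm2_le_qform (linear_gram_partial K) (hermitian_gram_partial K) M_gt0 (S_bnd K) y.
by have /andP[_] := S_bnd K y; nra.
Qed.

Lemma gramian_hcvg G : is_gramian C Cstar A Astar G ->
  forall x, hcvg (fun K => gram_partial K x) (G x).
Proof. by case. Qed.

Lemma gramian_stein_eq G : is_gramian C Cstar A Astar G -> stein_eq C Cstar A Astar G.
Proof.
move=> G_gram x; have SG := gramian_hcvg G_gram.
have S1 : hcvg (fun K => gram_partial K.+1 x) (Cstar (C x) + \sum_(j < d) Astar j (G (A j x))).
  under eq_fun do rewrite gram_partialS.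
  by apply: hcvgD; [exact: hcvg_cst | exact: hcvg_BA].
by rewrite (hcvg_unique (hcvg_shiftS (SG x)) S1) addrK.
Qed.

Lemma gramian_psd G : is_gramian C Cstar A Astar G -> psd G.
Proof. by move=> G_gram; exact: strong_limit_psd (gramian_hcvg G_gram) psd_gram_partial. Qed.

Lemma gramian_qform G : is_gramian C Cstar A Astar G ->
  forall x, (fun K => out_energy K x) @ \oo --> qform G x.
Proof.
move=> G_gram x.
have -> : (fun K => out_energy K x) = fun K => qform (gram_partial K) x.
  by apply/funext => K; rewrite qform_gram_partial.
exact: (@strong_limit_qform _ _ gram_partial G (gramian_hcvg G_gram) x).
Qed.

Lemma stein_sol_qform_of_stable H G : strongly_stable A -> is_bop H -> psd H ->
  stein_eq C Cstar A Astar H -> is_gramian C Cstar A Astar G ->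
  forall x, qform H x = qform G x.
Proof.
move=> stable H_bop H_psd H_eq G_gram x; have [c c_gt0 Hc] := bop_qform_le H_bop.
have tail0 : (fun K => qform (BApow K H) x) @ \oo --> 0.
  apply: (squeeze_cvg0 (v := fun K => c * \sum_(v : K.-tuple 'I_d) hnorm2 (Aword A v x))).
    move=> K; rewrite ger0_norm; last exact: Re_ge0 (psd_BApow K H_psd x).
    by rewrite qform_BApow mulr_sumr; apply: ler_sum => v _; exact: Hc.
  by have := cvgMl_tmp (a := c) (stable x); rewrite mulr0; exact.
have H_cvg : (fun K => out_energy K x) @ \oo --> qform H x.
  have -> : (fun K => out_energy K x) = fun K => qform H x - qform (BApow K H) x.
    by apply/funext => K; rewrite -(out_energy_stein_eq H_eq K x) addrK.
  by have := cvgB (cvg_cst (qform H x)) tail0; rewrite subr0; exact.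
exact: (cvg_unique _ H_cvg (gramian_qform G_gram (x := x))).
Qed.

Lemma gramian_unique_of_stable G : strongly_stable A -> is_gramian C Cstar A Astar G ->
  unique_psd_stein_sol C Cstar A Astar G.
Proof.
move=> stable G_gram; have G_lin := G_gram.1.1; have G_psd := gramian_psd G_gram.
split; [exact: G_gram.1 | exact: G_psd | exact: gramian_stein_eq |].
move=> H H_bop H_psd H_eq; apply: (eq_qform_hermitian H_bop.1 G_lin).
- exact: psd_hermitian H_bop.1 H_psd.
- exact: psd_hermitian G_lin G_psd.
- exact: stein_sol_qform_of_stable.
Qed.

(* The Stein inequality makes B_A^n[H] decrease in n, so the increasing
   sequence H - B_A^n[H] converges by nondecreasing_strong_cvg. *)
Lemma BApow_strong_limit H : is_bop H -> psd H -> stein_ineq C Cstar A Astar H ->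
  exists2 D, [/\ is_bop D, psd D & forall x, D x = \sum_(j < d) Astar j (D (A j x))]
           & forall x, hcvg (fun n => BApow n H x) (D x).
Proof.
move=> H_bop H_psd H_stein; have [c c_gt0 Hc] := bop_qform_le H_bop.
have H_lin := H_bop.1; have H_herm := psd_hermitian H_lin H_psd.
have T_lin n := linear_BApow n H_lin; have T_herm n := hermitian_BApow n H_herm.
have T_bnd n y : 0 <= qform (BApow n H) y <= c * hnorm2 y.
  rewrite Re_ge0 ?psd_BApow //=; apply: le_trans (Hc y).
  by have := qform_BApow_nonincreasing H_stein y (leq0n n); rewrite /qform BApow0.
pose P n y := H y - BApow n H y.
have /choice[L PL] : forall x, exists l, hcvg (fun n => P n x) l.
  move=> x; apply: (nondecreasing_strong_cvg (M := c)) => //.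
  - by move=> n; exact: linear_sub_fun.
  - by move=> n; exact: hermitianB.
  - move=> n m y nm; rewrite !qformB.
    have := qform_BApow_nonincreasing H_stein y nm.
    by have /andP[] := T_bnd n y; have /andP[] := T_bnd m y; lra.
  - by exists (qform H x) => n; rewrite qformB; have /andP[] := T_bnd n x; lra.
have TD x : hcvg (fun n => BApow n H x) (H x - L x).
  apply: (hcvg_le _ (PL x)) => n.
  by rewrite -hnorm2N opprB addrAC; exact: lexx.
exists (fun x => H x - L x) => //; split.
- split; first exact: strong_limit_linear TD T_lin.
  exists (2 * (c * c)); apply: (strong_limit_bounded TD) => n y.
  have := hnorm2_le_qform (T_lin n) (T_herm n) c_gt0 (T_bnd n) y.
  by have /andP[_] := T_bnd n y; nra.
- exact: strong_limit_psd TD (fun n => psd_BApow n H_psd).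
- move=> x; apply: (hcvg_unique (hcvg_shiftS (TD x))).
  by under eq_fun do rewrite BApowS; exact: (hcvg_BA TD).
Qed.

Lemma stable_of_unique_gramian H G : is_bop H -> spd H -> stein_ineq C Cstar A Astar H ->
  unique_psd_stein_sol C Cstar A Astar G -> strongly_stable A.
Proof.
move=> H_bop H_spd H_stein [G_bop G_psd G_eq G_unique].
have [D [D_bop D_psd D_fix] TD] := BApow_strong_limit H_bop (spd_psd H_spd) H_stein.
have GD_eq : stein_eq C Cstar A Astar (fun x => G x + D x).
  move=> x; under eq_bigr do rewrite (linD (Astar_lin _)).
  by rewrite big_split /= opprD addrACA G_eq -D_fix subrr addr0.
have GD_psd : psd (fun x => G x + D x) by move=> y; rewrite ipD addr_ge0.
have D0 x : D x = 0.
  apply: (addrI (G x)); rewrite addr0.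
  exact: (G_unique _ (bop_add G_bop D_bop) GD_psd GD_eq x).
have [eps eps_gt0 H_eps] := spd_qform H_spd.
move=> x; apply: (squeeze_cvg0 (v := fun n => eps^-1 * qform (BApow n H) x)).
  move=> n; rewrite ger0_norm; last by apply: sumr_ge0 => v _; exact: hnorm2_ge0.
  rewrite qform_BApow mulr_sumr; apply: ler_sum => v _.
  by rewrite ler_pdivlMl // H_eps.
rewrite -(mulr0 eps^-1); apply: cvgMl_tmp.
by have := strong_limit_qform TD (x := x); rewrite /qform D0 ip0; exact.
Qed.

Lemma gramian_unique_iff_stable H G : is_bop H -> spd H -> stein_ineq C Cstar A Astar H ->
  is_gramian C Cstar A Astar G ->
  (unique_psd_stein_sol C Cstar A Astar G <-> strongly_stable A).
Proof.
move=> H_bop H_spd H_stein G_gram; split; first exact: stable_of_unique_gramian H_bop H_spd H_stein.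
by move=> stable; exact: gramian_unique_of_stable.
Qed.

Lemma exactly_observable_of_stable H G : is_bop H -> spd H -> stein_eq C Cstar A Astar H ->
  strongly_stable A -> is_gramian C Cstar A Astar G -> exactly_observable G.
Proof.
move=> H_bop H_spd H_eq stable G_gram.
have [_ _ _ G_unique] := gramian_unique_of_stable stable G_gram.
have HG := G_unique H H_bop (spd_psd H_spd) H_eq.
by case: H_spd => eps [eps_gt0 H_eps]; exists eps; split=> // x; rewrite -HG.
Qed.

End SteinEquation.

Theorem proposition2p6 (R : realType) (X Y : hilbert R) (d : nat)
  (A Astar : 'I_d -> X -> X) (C : X -> Y) (Cstar : Y -> X)
  (hA : forall j, is_bop (A j)) (hAstar : forall j, is_adjoint (A j) (Astar j))
  (hC : is_bop C) (hCstar : is_adjoint C Cstar) :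
  ((exists H : X -> X, [/\ is_bop H, spd H & stein_ineq C Cstar A Astar H]) ->
     [/\ output_stable C A,
         exists G, is_gramian C Cstar A Astar G &
         forall G, is_gramian C Cstar A Astar G ->
           (unique_psd_stein_sol C Cstar A Astar G <-> strongly_stable A)])
  /\
  ((exists H : X -> X, [/\ is_bop H, spd H & stein_eq C Cstar A Astar H]) ->
     [/\ output_stable C A,
         exists G, is_gramian C Cstar A Astar G &
         forall G, is_gramian C Cstar A Astar G ->
           (unique_psd_stein_sol C Cstar A Astar G <-> strongly_stable A) /\
           (strongly_stable A -> exactly_observable G)]).
Proof.
have output_and_gramian H : is_bop H -> spd H -> stein_ineq C Cstar A Astar H ->
    output_stable C A /\ exists G, is_gramian C Cstar A Astar G.
  move=> H_bop H_spd H_stein.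
  have [M M_gt0 outM] := out_energy_bound hAstar hCstar H_bop (spd_psd H_spd) H_stein.
  split; first by exists M => x K; exact: outM.
  exact: (gramian_exists hA hAstar hC hCstar M_gt0 outM).
split=> -[H [H_bop H_spd H_stein]].
- have [out_stable G_ex] := output_and_gramian H H_bop H_spd H_stein.
  split=> // G; exact: (gramian_unique_iff_stable hA hAstar hCstar H_bop H_spd H_stein).
- have H_ineq := stein_ineq_of_eq H_stein.
  have [out_stable G_ex] := output_and_gramian H H_bop H_spd H_ineq.
  split=> // G G_gram; split.
    exact: (gramian_unique_iff_stable hA hAstar hCstar H_bop H_spd H_ineq G_gram).
  move=> stable.
  exact: (exactly_observable_of_stable hA hAstar hCstar H_bop H_spd H_stein stable G_gram).
Qed.
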